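(* Let $L$ be a finite relational language and $\mathbb X,\mathbb Y$ be $L$-structures. (I) The following are equivalent: (a) $\mathbb X\preccurlyeq_c^{\mathrm{fin}}\mathbb Y$, i.e. there is a sequence $\langle\Pi_r:r<\omega\rangle$ of nonempty subsets of $\mathrm{PC}(\mathbb X,\mathbb Y)$ such that for every $r<\omega$: (f1) for all $f\in\Pi_{r+1}$ and $x\in X$ there is $g\in\Pi_r$ with $x\in\operatorname{dom}g$ and $f\subseteq g$, and (f2) for all $f\in\Pi_{r+1}$ and $y\in Y$ there is $g\in\Pi_r$ with $y\in\operatorname{ran}g$ and $f\subseteq g$; (b) for each $n\in\omega$, player II has a winning strategy in the game $G^{\preccurlyeq_c}_n(\mathbb X,\mathbb Y)$; (c) $\mathbb X\lll_{\mathcal P}\mathbb Y$; (d) $\mathbb Y\lll_{\mathcal N}\mathbb X$. (II) The following are equivalent: (a) $\mathbb X\preccurlyeq_c^{\mathrm{fin}}\mathbb Y$ and $\mathbb Y\preccurlyeq_c^{\mathrm{fin}}\mathbb X$; (b) for each $n\in\omega$, player II has winning strategies in both $G^{\preccurlyeq_c}_n(\mathbb X,\mathbb Y)$ and $G^{\preccurlyeq_c}_n(\mathbb Y,\mathbb X)$; (c) $\mathbb X\equiv_{\mathcal P}\mathbb Y$; (d) $\mathbb X\equiv_{\mathcal N}\mathbb Y$; (e) $\mathbb X\equiv_{\mathcal P\cup\mathcal N}\mathbb Y$; (f) $\mathbb X\lll_{\mathcal P\cup\mathcal N}\mathbb Y$.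
   Context: $L=\langle R_i:i\in I\rangle$ is a relational language, $R_i$ of arity $n_i$; for an $L$-structure $\mathbb X$ with domain $X$, $R_i^{\mathbb X}$ is the interpretation of $R_i$. For a map $f$ and tuple $\bar x=\langle x_0,\dots,x_{k-1}\rangle$ write $f\bar x=\langle f(x_0),\dots,f(x_{k-1})\rangle$. A partial condensation from $\mathbb X$ to $\mathbb Y$ is a bijection $f$ from a set $\operatorname{dom}f\subseteq X$ onto a set $\operatorname{ran}f\subseteq Y$ such that for all $i\in I$ and $\bar x\in(\operatorname{dom}f)^{n_i}$, $\bar x\in R_i^{\mathbb X}$ implies $f\bar x\in R_i^{\mathbb Y}$; $\mathrm{PC}(\mathbb X,\mathbb Y)$ is the set of these. For $n\in\omega$, the game $G^{\preccurlyeq_c}_n(\mathbb X,\mathbb Y)$ has $n$ steps $k<n$; at step $k$ player I either chooses $x_k\in X$ and then player II chooses $y_k\in Y$, or player I chooses $y_k\in Y$ and then II chooses $x_k\in X$. Player II wins iff $\{\langle x_k,y_k\rangle:k<n\}\in\mathrm{PC}(\mathbb X,\mathbb Y)$. A strategy for II determines its move from the previous moves and I's current choice; it is winning if II wins every play in which it is followed. Formula classes: $\mathcal P_0$ consists of all atomic formulas ($v_\alpha=v_\beta$, $R_i(v_{\alpha_1},\dots,v_{\alpha_{n_i}})$) and all $\neg\,v_\alpha=v_\beta$. $\mathcal N_0$ consists of all $\neg R_i(v_{\alpha_1},\dots,v_{\alpha_{n_i}})$, all $v_\alpha=v_\beta$ and all $\neg\,v_\alpha=v_\beta$. $\mathcal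 P$ (resp. $\mathcal N$), the $R$-positive (resp. $R$-negative) first order formulas, is the closure of $\mathcal P_0$ (resp. $\mathcal N_0$) under finite conjunctions, finite disjunctions, $\forall v$ and $\exists v$ (no negation). For a class $\mathcal F$ of formulas, $\mathbb X\lll_{\mathcal F}\mathbb Y$ means every sentence of $\mathcal F$ true in $\mathbb X$ is true in $\mathbb Y$, and $\mathbb X\equiv_{\mathcal F}\mathbb Y$ means they satisfy the same sentences of $\mathcal F$. *)

From Stdlib Require Import List.
Import ListNotations.

Record language := { Rsym : Type; arity : Rsym -> nat }.

Definition finite_language (L : language) : Prop :=
  exists l : list (Rsym L), forall i, In i l.

(** L-structures.  The interpretation of R_i is a set of lists; only lists of
    length [arity L i] (i.e. n_i-tuples) are ever consulted. *)
Record structure (L : language) := {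
  carrier :> Type;
  interp : forall i : Rsym L, list carrier -> Prop }.
Arguments carrier {L} _.
Arguments interp {L} _ _ _.

(** Partial maps are represented by their graphs. *)
Definition dom {A B : Type} (f : A -> B -> Prop) (x : A) : Prop := exists y, f x y.
Definition ran {A B : Type} (f : A -> B -> Prop) (y : B) : Prop := exists x, f x y.
Definition subrel {A B : Type} (f g : A -> B -> Prop) : Prop :=
  forall x y, f x y -> g x y.

Definition PC {L : language} (X Y : structure L) (f : X -> Y -> Prop) : Prop :=
  (forall x y y', f x y -> f x y' -> y = y') /\
  (forall x x' y, f x y -> f x' y -> x = x') /\
  (forall (i : Rsym L) (xs : list X) (ys : list Y),
      length xs = arity L i -> Forall2 f xs ys ->
      interp X i xs -> interp Y i ys).

Definition fin_cond {L : language} (X Y : structure L) : Prop :=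
  exists Pi : nat -> (X -> Y -> Prop) -> Prop,
    (forall r, exists f, Pi r f) /\
    (forall r f, Pi r f -> PC X Y f) /\
    (forall r f, Pi (S r) f -> forall x : X,
        exists g, Pi r g /\ dom g x /\ subrel f g) /\
    (forall r f, Pi (S r) f -> forall y : Y,
        exists g, Pi r g /\ ran g y /\ subrel f g).

(** The game G_n^{≼_c}(X,Y).  A history records, for each step, whether
    player I chose in X (true) or in Y (false), and the pair (x_k, y_k). *)
Definition history {L : language} (X Y : structure L) := list (bool * X * Y).

Record strategyII {L : language} (X Y : structure L) := {
  respX : history X Y -> X -> Y;
  respY : history X Y -> Y -> X }.
Arguments respX {L X Y} _ _ _.
Arguments respY {L X Y} _ _ _.

Fixpoint play {L : language} {X Y : structure L} (s : strategyII X Y)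
    (ms : list (X + Y)) (h : history X Y) : history X Y :=
  match ms with
  | [] => h
  | inl x :: ms' => play s ms' (h ++ [(true, x, respX s h x)])
  | inr y :: ms' => play s ms' (h ++ [(false, respY s h y, y)])
  end.

Definition winning {L : language} {X Y : structure L} (n : nat)
    (s : strategyII X Y) : Prop :=
  forall ms : list (X + Y), length ms = n ->
    PC X Y (fun x y => exists b, In (b, x, y) (play s ms [])).

Definition II_wins {L : language} (n : nat) (X Y : structure L) : Prop :=
  exists s : strategyII X Y, winning n s.

(** First-order formulas (negation only in front of atomic formulas).
    [FRel i vs] is R_i(v_{vs 0}, ..., v_{vs (n_i - 1)}). *)
Inductive formula (L : language) : Type :=
| FEq : nat -> nat -> formula L
| FNeq : nat -> nat -> formula L
| FRel : Rsym L -> (nat -> nat) -> formula L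
| FNRel : Rsym L -> (nat -> nat) -> formula L
| FAnd : formula L -> formula L -> formula L
| FOr : formula L -> formula L -> formula L
| FAll : nat -> formula L -> formula L
| FEx : nat -> formula L -> formula L.
Arguments FEq {L}. Arguments FNeq {L}. Arguments FRel {L}. Arguments FNRel {L}.
Arguments FAnd {L}. Arguments FOr {L}. Arguments FAll {L}. Arguments FEx {L}.

Fixpoint free_in {L : language} (v : nat) (phi : formula L) : Prop :=
  match phi with
  | FEq a b | FNeq a b => v = a \/ v = b
  | FRel i vs | FNRel i vs => exists k, k < arity L i /\ vs k = v
  | FAnd p q | FOr p q => free_in v p \/ free_in v q
  | FAll w p | FEx w p => v <> w /\ free_in v p
  end.

Definition sentence {L : language} (phi : formula L) : Prop :=
  forall v, ~ free_in v phi.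

Definition upd {A : Type} (e : nat -> A) (v : nat) (a : A) : nat -> A :=
  fun w => if Nat.eqb w v then a else e w.

Fixpoint sat {L : language} (M : structure L) (e : nat -> M) (phi : formula L)
    : Prop :=
  match phi with
  | FEq a b => e a = e b
  | FNeq a b => e a <> e b
  | FRel i vs => interp M i (map (fun k => e (vs k)) (seq 0 (arity L i)))
  | FNRel i vs => ~ interp M i (map (fun k => e (vs k)) (seq 0 (arity L i)))
  | FAnd p q => sat M e p /\ sat M e q
  | FOr p q => sat M e p \/ sat M e q
  | FAll v p => forall a : M, sat M (upd e v a) p
  | FEx v p => exists a : M, sat M (upd e v a) p
  end.

(** Truth of a sentence in a (nonempty) structure. *)
Definition holds {L : language} (M : structure L) (phi : formula L) : Prop :=
  forall e : nat -> M, sat M e phi.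

Fixpoint is_P {L : language} (phi : formula L) : Prop :=
  match phi with
  | FEq _ _ | FNeq _ _ | FRel _ _ => True
  | FNRel _ _ => False
  | FAnd p q | FOr p q => is_P p /\ is_P q
  | FAll _ p | FEx _ p => is_P p
  end.

Fixpoint is_N {L : language} (phi : formula L) : Prop :=
  match phi with
  | FEq _ _ | FNeq _ _ | FNRel _ _ => True
  | FRel _ _ => False
  | FAnd p q | FOr p q => is_N p /\ is_N q
  | FAll _ p | FEx _ p => is_N p
  end.

Definition is_PN {L : language} (phi : formula L) : Prop := is_P phi \/ is_N phi.

Definition lll {L : language} (F : formula L -> Prop) (X Y : structure L) : Prop :=
  forall phi, F phi -> sentence phi -> holds X phi -> holds Y phi.

Definition equivF {L : language} (F : formula L -> Prop) (X Y : structure L)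
    : Prop :=
  forall phi, F phi -> sentence phi -> (holds X phi <-> holds Y phi).

(** Condensation by finite back-and-forth systems is captured by the graded
    relation [extendable r p]: the finite partial condensation [p] survives [r]
    rounds in which player I adds any point of [X] or of [Y] and II answers.
    Player II wins [G_n] exactly when [extendable n []] holds, and so does
    [fin_cond X Y] for all [n] at once.  An induction on formulas shows that
    [extendable r] transports every R-positive formula of quantifier rank at
    most [r] from [X] to [Y].  Conversely, since [L] is finite there are only
    finitely many R-positive "Hintikka formulas" of each rank in [k] free
    variables; the rank-[r] Hintikka formula of a tuple of [X] is positive and
    true of it, and any tuple of [Y] satisfying it is [r]-extendable from it.
    Negating a formula swaps R-positive and R-negative formulas, which yields
    the statements about [N] and, by symmetry, part (II). *)

From Stdlib Require Import List Arith Lia Classical ClassicalEpsilon.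
Import ListNotations.

Section Formulas.
Context {L : language}.

Lemma sat_ext (M : structure L) (phi : formula L) (e e' : nat -> M) :
  (forall v, free_in v phi -> e v = e' v) -> (sat M e phi <-> sat M e' phi).
Proof.
  revert e e'.
  induction phi as [a b|a b|i vs|i vs|p IHp q IHq|p IHp q IHq|v p IH|v p IH];
    intros e e' He; simpl in *.
  - rewrite (He a), (He b) by auto. tauto.
  - rewrite (He a), (He b) by auto. tauto.
  - rewrite (map_ext_in _ (fun k => e' (vs k))); [tauto|].
    intros k Hk. apply in_seq in Hk. apply He. exists k. split; [lia|auto].
  - rewrite (map_ext_in _ (fun k => e' (vs k))); [tauto|].
    intros k Hk. apply in_seq in Hk. apply He. exists k. split; [lia|auto].
  - rewrite (IHp e e'), (IHq e e') by (intros; apply He; auto). tauto.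
  - rewrite (IHp e e'), (IHq e e') by (intros; apply He; auto). tauto.
  - assert (Hupd : forall a, sat M (upd e v a) p <-> sat M (upd e' v a) p).
    { intro a. apply IH. intros w Hw. unfold upd.
      destruct (Nat.eqb_spec w v); auto. }
    split; intros Hs a; apply Hupd; auto.
  - assert (Hupd : forall a, sat M (upd e v a) p <-> sat M (upd e' v a) p).
    { intro a. apply IH. intros w Hw. unfold upd.
      destruct (Nat.eqb_spec w v); auto. }
    split; intros [a Ha]; exists a; apply Hupd; auto.
Qed.

Lemma holds_iff_sat (M : structure L) (phi : formula L) (e : nat -> M) :
  sentence phi -> (holds M phi <-> sat M e phi).
Proof.
  intros Hs. split; [intro H; apply H|].
  intros H e'. apply (sat_ext M phi e e'); [|exact H].
  intros v Hv. destruct (Hs v Hv).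
Qed.

Fixpoint neg (phi : formula L) : formula L :=
  match phi with
  | FEq a b => FNeq a b
  | FNeq a b => FEq a b
  | FRel i vs => FNRel i vs
  | FNRel i vs => FRel i vs
  | FAnd p q => FOr (neg p) (neg q)
  | FOr p q => FAnd (neg p) (neg q)
  | FAll v p => FEx v (neg p)
  | FEx v p => FAll v (neg p)
  end.

Lemma sat_neg (M : structure L) (phi : formula L) (e : nat -> M) :
  sat M e (neg phi) <-> ~ sat M e phi.
Proof.
  revert e.
  induction phi as [a b|a b|i vs|i vs|p IHp q IHq|p IHp q IHq|v p IH|v p IH];
    intros e; simpl.
  - tauto.
  - split; [tauto|apply NNPP].
  - tauto.
  - split; [tauto|apply NNPP].
  - rewrite IHp, IHq. split; [tauto|apply not_and_or].
  - rewrite IHp, IHq. tauto.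
  - split.
    + intros [a Ha] H. apply IH in Ha. apply Ha, H.
    + intro H. apply not_all_ex_not in H. destruct H as [a Ha].
      exists a. apply IH, Ha.
  - split.
    + intros H [a Ha]. apply (proj1 (IH _) (H a)), Ha.
    + intros H a. apply IH. intro Ha. apply H. eauto.
Qed.

Lemma free_in_neg (v : nat) (phi : formula L) : free_in v (neg phi) <-> free_in v phi.
Proof.
  induction phi; simpl; try tauto; try (rewrite IHphi1, IHphi2; tauto).
  all: rewrite IHphi; tauto.
Qed.

Lemma sentence_neg (phi : formula L) : sentence phi -> sentence (neg phi).
Proof. intros H v Hv. apply (H v), free_in_neg, Hv. Qed.

Lemma is_P_neg (phi : formula L) : is_N phi -> is_P (neg phi).
Proof. induction phi; simpl; tauto. Qed.

Lemma is_N_neg (phi : formula L) : is_P phi -> is_N (neg phi).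
Proof. induction phi; simpl; tauto. Qed.

Lemma lll_neg (F G : formula L -> Prop) (X Y : structure L) :
  inhabited Y -> (forall phi, G phi -> F (neg phi)) -> lll F X Y -> lll G Y X.
Proof.
  intros [y0] HFG HXY phi HG Hs HY. apply NNPP. intro HnX.
  apply not_all_ex_not in HnX. destruct HnX as [e He].
  assert (HnegX : holds X (neg phi)).
  { apply (holds_iff_sat X _ e); [apply sentence_neg, Hs|apply sat_neg, He]. }
  apply HXY in HnegX; [|apply HFG, HG|apply sentence_neg, Hs].
  apply (proj1 (sat_neg Y phi (fun _ => y0)) (HnegX _)), HY.
Qed.

Lemma equivF_iff_lll (F : formula L -> Prop) (X Y : structure L) :
  equivF F X Y <-> lll F X Y /\ lll F Y X.
Proof.
  unfold equivF, lll. split.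
  - intros H. split; intros phi HF Hs; apply (H phi HF Hs).
  - intros [HXY HYX] phi HF Hs. split; auto.
Qed.

Lemma lll_PN (X Y : structure L) : lll is_PN X Y <-> lll is_P X Y /\ lll is_N X Y.
Proof.
  unfold lll, is_PN. split.
  - intros H. split; intros phi HF; apply H; auto.
  - intros [HP HN] phi [HF|HF]; auto.
Qed.

Fixpoint quantifier_rank (phi : formula L) : nat :=
  match phi with
  | FAnd p q | FOr p q => max (quantifier_rank p) (quantifier_rank q)
  | FAll _ p | FEx _ p => S (quantifier_rank p)
  | _ => 0
  end.

(** The syntax has no truth constants: [forall v0, v0 = v0] and
    [exists v0, v0 <> v0] serve as the empty conjunction and disjunction. *)
Definition bigAnd (l : list (formula L)) : formula L :=
  fold_right FAnd (FAll 0 (FEq 0 0)) l.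

Definition bigOr (l : list (formula L)) : formula L :=
  fold_right FOr (FEx 0 (FNeq 0 0)) l.

Lemma sat_bigAnd (M : structure L) (e : nat -> M) (l : list (formula L)) :
  sat M e (bigAnd l) <-> forall c, In c l -> sat M e c.
Proof.
  induction l as [|c l IH]; simpl.
  - split; [tauto|intros _ a; reflexivity].
  - rewrite IH. split.
    + intros [Hc Hl] c' [<-|Hc']; auto.
    + intros H. split; auto.
Qed.

Lemma sat_bigOr (M : structure L) (e : nat -> M) (l : list (formula L)) :
  sat M e (bigOr l) <-> exists c, In c l /\ sat M e c.
Proof.
  induction l as [|c l IH]; simpl.
  - split; [intros [a Ha]; contradiction (Ha eq_refl)|intros [c [[] _]]].
  - rewrite IH. split.
    + intros [H|[c' [Hc' H]]]; eauto.
    + intros [c' [[<-|Hc'] H]]; eauto.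
Qed.

Lemma free_in_bigAnd (v : nat) (l : list (formula L)) :
  free_in v (bigAnd l) -> exists c, In c l /\ free_in v c.
Proof.
  induction l as [|c l IH]; simpl.
  - intros [Hv [H|H]]; contradiction.
  - intros [H|H]; eauto. destruct (IH H) as [c' [? ?]]; eauto.
Qed.

Lemma free_in_bigOr (v : nat) (l : list (formula L)) :
  free_in v (bigOr l) -> exists c, In c l /\ free_in v c.
Proof.
  induction l as [|c l IH]; simpl.
  - intros [Hv [H|H]]; contradiction.
  - intros [H|H]; eauto. destruct (IH H) as [c' [? ?]]; eauto.
Qed.

Lemma is_P_bigAnd (l : list (formula L)) : (forall c, In c l -> is_P c) -> is_P (bigAnd l).
Proof. induction l; simpl; auto. Qed.

Lemma is_P_bigOr (l : list (formula L)) : (forall c, In c l -> is_P c) -> is_P (bigOr l).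
Proof. induction l; simpl; auto. Qed.

End Formulas.

Definition env {A : Type} (l : list A) (d : A) : nat -> A := fun i => nth i l d.

Lemma upd_env {A : Type} (l : list A) (d a : A) (v : nat) : v <= length l ->
  upd (env l d) (length l) a v = env (l ++ [a]) d v.
Proof.
  intros Hv. unfold upd, env. destruct (Nat.eqb_spec v (length l)) as [->|Hne].
  - rewrite app_nth2, Nat.sub_diag by lia. reflexivity.
  - rewrite app_nth1 by lia. reflexivity.
Qed.

Lemma sat_upd_env {L : language} (M : structure L) (l : list M) (d a : M)
    (phi : formula L) :
  (forall v, free_in v phi -> v <= length l) ->
  (sat M (upd (env l d) (length l) a) phi <-> sat M (env (l ++ [a]) d) phi).
Proof. intros Hfree. apply sat_ext. intros v Hv. apply upd_env, Hfree, Hv. Qed.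

Lemma Forall2_map_same {A B C : Type} (R : A -> B -> Prop) (f : C -> A) (g : C -> B)
    (l : list C) :
  (forall c, In c l -> R (f c) (g c)) -> Forall2 R (map f l) (map g l).
Proof. induction l; simpl; intros; constructor; auto. Qed.

Definition classicb (P : Prop) : bool := if excluded_middle_informative P then true else false.

Lemma classicb_true (P : Prop) : classicb P = true <-> P.
Proof. unfold classicb. destruct (excluded_middle_informative P); split; auto; discriminate. Qed.

Fixpoint tuples (n k : nat) : list (list nat) :=
  match n with
  | 0 => [[]]
  | S n' => flat_map (fun i => map (cons i) (tuples n' k)) (seq 0 k)
  end.

Lemma in_tuples (n k : nat) (t : list nat) :
  In t (tuples n k) <-> length t = n /\ forall a, In a t -> a < k.
Proof.
  revert t. induction n as [|n IH]; intros t; simpl.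
  - split.
    + intros [<-|[]]. split; [reflexivity|intros a []].
    + intros [Hl _]. left. symmetry. apply length_zero_iff_nil, Hl.
  - rewrite in_flat_map. split.
    + intros [a [Ha Ht]]. apply in_map_iff in Ht. destruct Ht as [t' [<- Ht']].
      apply IH in Ht'. destruct Ht' as [Hl Hk]. apply in_seq in Ha.
      split; [simpl; lia|]. intros b [<-|Hb]; [lia|auto].
    + intros [Hl Hk]. destruct t as [|a t]; [discriminate|].
      exists a. split; [apply in_seq; specialize (Hk a (or_introl eq_refl)); lia|].
      apply in_map, IH. split; [simpl in Hl; lia|]. intros b Hb. apply Hk. right. exact Hb.
Qed.

Fixpoint subseqs {A : Type} (l : list A) : list (list A) :=
  match l with
  | [] => [[]]
  | a :: l' => map (cons a) (subseqs l') ++ subseqs l'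
  end.

Lemma filter_in_subseqs {A : Type} (f : A -> bool) (l : list A) : In (filter f l) (subseqs l).
Proof.
  induction l as [|a l IH]; simpl; auto.
  destruct (f a); apply in_or_app; [left; apply in_map|right]; exact IH.
Qed.

Lemma in_combine_nth {A B : Type} (xs : list A) (ys : list B) (dx : A) (dy : B) x y :
  length ys = length xs -> In (x, y) (combine xs ys) ->
  exists i, i < length xs /\ nth i xs dx = x /\ nth i ys dy = y.
Proof.
  intros Hl H. destruct (In_nth _ _ (dx, dy) H) as [i [Hi Hn]].
  rewrite length_combine in Hi. rewrite combine_nth in Hn by auto.
  injection Hn as Hx Hy. exists i. split; [lia|auto].
Qed.

Lemma Forall2_in_combine {A B : Type} (xs : list A) (ys : list B) (dx : A) (dy : B) us vs :
  length ys = length xs -> Forall2 (fun x y => In (x, y) (combine xs ys)) us vs ->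
  exists t, (forall j, In j t -> j < length xs)
    /\ map (fun j => nth j xs dx) t = us /\ map (fun j => nth j ys dy) t = vs.
Proof.
  intros Hl HF. induction HF as [|u v us vs Huv HF IH].
  - exists []. split; [intros j []|split; reflexivity].
  - destruct (in_combine_nth xs ys dx dy u v Hl Huv) as [i [Hi [Hu Hv]]].
    destruct IH as [t [Ht [Hus Hvs]]]. exists (i :: t). simpl. split.
    + intros j [<-|Hj]; auto.
    + split; f_equal; auto.
Qed.

Lemma map_nth_seq {A : Type} (l : list A) (d : A) (t : list nat) :
  map (fun m => nth (nth m t 0) l d) (seq 0 (length t)) = map (fun j => nth j l d) t.
Proof.
  induction t as [|a t IH]; simpl; auto.
  f_equal. rewrite <- seq_shift, map_map. exact IH.
Qed.

Lemma combine_snoc {A B : Type} (xs : list A) (ys : list B) x y :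
  length xs = length ys -> combine (xs ++ [x]) (ys ++ [y]) = combine xs ys ++ [(x, y)].
Proof.
  revert ys. induction xs as [|a xs IH]; intros [|b ys] Hl; simpl in *;
    try discriminate; auto.
  f_equal. apply IH. lia.
Qed.

Section BackAndForth.
Context {L : language} (X Y : structure L).

Definition PC_list (p : list (X * Y)) : Prop := PC X Y (fun x y => In (x, y) p).

Lemma PC_subrel (f g : X -> Y -> Prop) : subrel g f -> PC X Y f -> PC X Y g.
Proof.
  intros Hgf [Hfun [Hinj Hrel]]. split; [|split].
  - intros x y y' H H'. eapply Hfun; apply Hgf; eauto.
  - intros x x' y H H'. eapply Hinj; apply Hgf; eauto.
  - intros i xs ys Hl HF. apply Hrel; auto. eapply Forall2_impl; [exact Hgf|exact HF].
Qed.

Fixpoint extendable (r : nat) (p : list (X * Y)) : Prop :=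
  match r with
  | 0 => PC_list p
  | S r' => PC_list p
      /\ (forall x, exists y, extendable r' (p ++ [(x, y)]))
      /\ (forall y, exists x, extendable r' (p ++ [(x, y)]))
  end.

Lemma extendable_PC (r : nat) (p : list (X * Y)) : extendable r p -> PC_list p.
Proof. destruct r; simpl; tauto. Qed.

Lemma subrel_snoc (f g : X -> Y -> Prop) (p : list (X * Y)) (x : X) (y : Y) :
  (forall a b, In (a, b) p -> f a b) -> subrel f g -> g x y ->
  forall a b, In (a, b) (p ++ [(x, y)]) -> g a b.
Proof.
  intros Hp Hfg Hxy a b Hab. apply in_app_or in Hab.
  destruct Hab as [Hab|[Hab|[]]]; [apply Hfg, Hp, Hab|].
  injection Hab as -> ->. exact Hxy.
Qed.

Section FromSystem.
Variable Pi : nat -> (X -> Y -> Prop) -> Prop.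
Hypothesis Pi_PC : forall r f, Pi r f -> PC X Y f.
Hypothesis Pi_forth :
  forall r f, Pi (S r) f -> forall x, exists g, Pi r g /\ dom g x /\ subrel f g.
Hypothesis Pi_back :
  forall r f, Pi (S r) f -> forall y, exists g, Pi r g /\ ran g y /\ subrel f g.

Lemma extendable_of_system (r : nat) (f : X -> Y -> Prop) (p : list (X * Y)) :
  Pi r f -> (forall x y, In (x, y) p -> f x y) -> extendable r p.
Proof.
  revert f p. induction r as [|r IH]; intros f p Hf Hp.
  - exact (PC_subrel f _ Hp (Pi_PC _ _ Hf)).
  - split; [exact (PC_subrel f _ Hp (Pi_PC _ _ Hf))|split].
    + intro x. destruct (Pi_forth r f Hf x) as [g [Hg [[y Hy] Hfg]]].
      exists y. exact (IH g _ Hg (subrel_snoc f g p x y Hp Hfg Hy)).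
    + intro y. destruct (Pi_back r f Hf y) as [g [Hg [[x Hx] Hfg]]].
      exists x. exact (IH g _ Hg (subrel_snoc f g p x y Hp Hfg Hx)).
Qed.

End FromSystem.

Lemma fin_cond_iff_extendable : fin_cond X Y <-> forall n, extendable n [].
Proof.
  split.
  - intros [Pi [Hne [HPC [Hforth Hback]]]] n. destruct (Hne n) as [f Hf].
    apply (extendable_of_system Pi HPC Hforth Hback n f); [exact Hf|intros x y []].
  - intro Hext.
    exists (fun r f => exists p, extendable r p /\ forall x y, f x y <-> In (x, y) p).
    split; [|split; [|split]].
    + intro r. exists (fun x y => In (x, y) (@nil (X * Y))). exists []. split; [apply Hext|tauto].
    + intros r f [p [Hp Hf]]. apply (PC_subrel (fun x y => In (x, y) p)).
      * intros x y; apply Hf.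
      * apply (extendable_PC r), Hp.
    + intros r f [p [[_ [Hforth _]] Hf]] x. destruct (Hforth x) as [y Hy].
      exists (fun a b => In (a, b) (p ++ [(x, y)])).
      split; [exists (p ++ [(x, y)]); split; [exact Hy|tauto]|split].
      * exists y. apply in_or_app. right. left. reflexivity.
      * intros a b Hab. apply in_or_app. left. apply Hf, Hab.
    + intros r f [p [[_ [_ Hback]] Hf]] y. destruct (Hback y) as [x Hx].
      exists (fun a b => In (a, b) (p ++ [(x, y)])).
      split; [exists (p ++ [(x, y)]); split; [exact Hx|tauto]|split].
      * exists x. apply in_or_app. right. left. reflexivity.
      * intros a b Hab. apply in_or_app. left. apply Hf, Hab.
Qed.

Lemma related_upd (p : list (X * Y)) (eX : nat -> X) (eY : nat -> Y)
    (v : nat) (phi : formula L) (x : X) (y : Y) :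
  (forall w, w <> v /\ free_in w phi -> In (eX w, eY w) p) ->
  forall w, free_in w phi -> In (upd eX v x w, upd eY v y w) (p ++ [(x, y)]).
Proof.
  intros Hp w Hw. apply in_or_app. unfold upd. destruct (Nat.eqb_spec w v).
  - right. left. reflexivity.
  - left. apply Hp. auto.
Qed.

Lemma extendable_sat (phi : formula L) (r : nat) (p : list (X * Y))
    (eX : nat -> X) (eY : nat -> Y) :
  is_P phi -> quantifier_rank phi <= r -> extendable r p ->
  (forall v, free_in v phi -> In (eX v, eY v) p) -> sat X eX phi -> sat Y eY phi.
Proof.
  revert r p eX eY.
  induction phi as [a b|a b|i vs|i vs|p1 IH1 p2 IH2|p1 IH1 p2 IH2|v q IH|v q IH];
    intros r p eX eY HP Hr Hext Hp Hs; simpl in *.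
  - destruct (extendable_PC _ _ Hext) as [Hfun _].
    apply (Hfun (eX a)); [apply Hp; auto|rewrite Hs; apply Hp; auto].
  - destruct (extendable_PC _ _ Hext) as [_ [Hinj _]].
    intro He. apply Hs, (Hinj _ _ (eY a)); [apply Hp; auto|rewrite He; apply Hp; auto].
  - destruct (extendable_PC _ _ Hext) as [_ [_ Hrel]].
    refine (Hrel i _ _ _ _ Hs).
    + rewrite length_map, length_seq. reflexivity.
    + apply Forall2_map_same. intros k Hk. apply in_seq in Hk.
      apply Hp. exists k. split; [lia|reflexivity].
  - contradiction.
  - destruct HP as [HP1 HP2], Hs as [Hs1 Hs2]. split.
    + exact (IH1 r p eX eY HP1 ltac:(lia) Hext (fun v Hv => Hp v (or_introl Hv)) Hs1).
    + exact (IH2 r p eX eY HP2 ltac:(lia) Hext (fun v Hv => Hp v (or_intror Hv)) Hs2).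
  - destruct HP as [HP1 HP2], Hs as [Hs1|Hs2].
    + left. exact (IH1 r p eX eY HP1 ltac:(lia) Hext (fun v Hv => Hp v (or_introl Hv)) Hs1).
    + right. exact (IH2 r p eX eY HP2 ltac:(lia) Hext (fun v Hv => Hp v (or_intror Hv)) Hs2).
  - destruct r as [|r]; [lia|]. destruct Hext as [_ [_ Hback]].
    intro y. destruct (Hback y) as [x Hx].
    exact (IH r _ _ _ HP ltac:(lia) Hx (related_upd p eX eY v q x y Hp) (Hs x)).
  - destruct r as [|r]; [lia|]. destruct Hext as [_ [Hforth _]].
    destruct Hs as [x Hx]. destruct (Hforth x) as [y Hy]. exists y.
    exact (IH r _ _ _ HP ltac:(lia) Hy (related_upd p eX eY v q x y Hp) Hx).
Qed.

Lemma extendable_lll_P : inhabited X -> (forall n, extendable n []) -> lll is_P X Y.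
Proof.
  intros [x0] Hext phi HP Hs HX eY.
  apply (extendable_sat phi (quantifier_rank phi) [] (fun _ => x0) eY HP (le_n _) (Hext _)).
  - intros v Hv. destruct (Hs v Hv).
  - apply HX.
Qed.

Definition graph (h : history X Y) : list (X * Y) := map (fun t => (snd (fst t), snd t)) h.

Lemma in_graph (h : history X Y) (x : X) (y : Y) :
  In (x, y) (graph h) <-> exists b, In (b, x, y) h.
Proof.
  unfold graph. rewrite in_map_iff. split.
  - intros [[[b a] c] [E Hin]]. injection E as -> ->. eauto.
  - intros [b Hb]. exists (b, x, y). auto.
Qed.

Lemma graph_snoc (h : history X Y) (b : bool) (x : X) (y : Y) :
  graph (h ++ [(b, x, y)]) = graph h ++ [(x, y)].
Proof. unfold graph. rewrite map_app. reflexivity. Qed.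

Lemma play_extends (s : strategyII X Y) (ms : list (X + Y)) (h : history X Y) t :
  In t h -> In t (play s ms h).
Proof.
  revert h. induction ms as [|[x|y] ms IH]; intros h H; simpl; auto.
  all: apply IH, in_or_app; left; exact H.
Qed.

Definition wins_from (s : strategyII X Y) (n : nat) (h : history X Y) : Prop :=
  forall ms : list (X + Y), length ms = n ->
    PC X Y (fun x y => exists b, In (b, x, y) (play s ms h)).

Lemma wins_from_PC (x0 : X) (s : strategyII X Y) (n : nat) (h : history X Y) :
  wins_from s n h -> PC_list (graph h).
Proof.
  intros H. refine (PC_subrel _ _ _ (H (repeat (inl x0) n) (repeat_length _ _))).
  intros x y Hxy. apply in_graph in Hxy. destruct Hxy as [b Hb].
  exists b. apply play_extends, Hb.
Qed.

Lemma wins_from_extendable (x0 : X) (s : strategyII X Y) (n : nat) (h : history X Y) :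
  wins_from s n h -> extendable n (graph h).
Proof.
  revert h. induction n as [|n IH]; intros h H.
  - exact (wins_from_PC x0 s 0 h H).
  - split; [exact (wins_from_PC x0 s _ h H)|split].
    + intro x. exists (respX s h x). rewrite <- (graph_snoc h true). apply IH.
      intros ms Hms. apply (H (inl x :: ms)). simpl. lia.
    + intro y. exists (respY s h y). rewrite <- (graph_snoc h false). apply IH.
      intros ms Hms. apply (H (inr y :: ms)). simpl. lia.
Qed.

Lemma II_wins_extendable (x0 : X) (n : nat) : II_wins n X Y -> extendable n [].
Proof. intros [s Hs]. exact (wins_from_extendable x0 s n [] Hs). Qed.

(** After history [h], [n - S (length h)] steps follow the current one; the
    answer keeps the position extendable for that many rounds whenever possible. *)
Definition extending_strategy (n : nat) (x0 : X) (y0 : Y) : strategyII X Y := {|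
  respX := fun h x =>
    epsilon (inhabits y0) (fun y => extendable (n - S (length h)) (graph h ++ [(x, y)]));
  respY := fun h y =>
    epsilon (inhabits x0) (fun x => extendable (n - S (length h)) (graph h ++ [(x, y)])) |}.

Lemma extending_strategy_wins (n : nat) (x0 : X) (y0 : Y) (k : nat) (h : history X Y) :
  length h + k = n -> extendable k (graph h) -> wins_from (extending_strategy n x0 y0) k h.
Proof.
  revert h. induction k as [|k IH]; intros h Hl Hext [|m ms] Hms; try discriminate.
  - apply (PC_subrel (fun x y => In (x, y) (graph h))); [|exact Hext].
    intros x y Hxy. apply in_graph, Hxy.
  - injection Hms as Hms. destruct Hext as [_ [Hforth Hback]].
    assert (Hk : n - S (length h) = k) by lia.
    destruct m as [x|y]; cbn [play];
      (apply IH; [rewrite length_app; simpl; lia| |exact Hms]);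
      rewrite graph_snoc; cbn [respX respY extending_strategy]; rewrite Hk.
    + apply (epsilon_spec _ (fun y => extendable k (graph h ++ [(x, y)]))), Hforth.
    + apply (epsilon_spec _ (fun x => extendable k (graph h ++ [(x, y)]))), Hback.
Qed.

Lemma extendable_II_wins (x0 : X) (y0 : Y) (n : nat) : extendable n [] -> II_wins n X Y.
Proof.
  intros Hext. exists (extending_strategy n x0 y0).
  exact (extending_strategy_wins n x0 y0 n [] eq_refl Hext).
Qed.

End BackAndForth.

Section Hintikka.
Context {L : language} (syms : list (Rsym L)) (syms_complete : forall i, In i syms).

Definition atoms (k : nat) : list (formula L) :=
  flat_map (fun i => flat_map (fun j => [FEq i j; FNeq i j]) (seq 0 k)) (seq 0 k) ++
  flat_map (fun R => map (fun t => FRel R (fun m => nth m t 0)) (tuples (arity L R) k)) syms.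

Lemma in_atoms_inv (k : nat) (a : formula L) : In a (atoms k) ->
  (exists i j, i < k /\ j < k /\ (a = FEq i j \/ a = FNeq i j))
  \/ (exists R t, In t (tuples (arity L R) k) /\ a = FRel R (fun m => nth m t 0)).
Proof.
  unfold atoms. intros Ha. apply in_app_or in Ha. destruct Ha as [Ha|Ha].
  - left. apply in_flat_map in Ha. destruct Ha as [i [Hi Ha]].
    apply in_flat_map in Ha. destruct Ha as [j [Hj Ha]]. apply in_seq in Hi, Hj.
    exists i, j. split; [lia|split; [lia|]]. destruct Ha as [<-|[<-|[]]]; auto.
  - right. apply in_flat_map in Ha. destruct Ha as [R [_ Ha]].
    apply in_map_iff in Ha. destruct Ha as [t [<- Ht]]. eauto.
Qed.

Lemma free_in_atoms (k : nat) (a : formula L) (v : nat) :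
  In a (atoms k) -> free_in v a -> v < k.
Proof.
  intros Ha Hv.
  destruct (in_atoms_inv k a Ha) as [[i [j [Hi [Hj [->| ->]]]]]|[R [t [Ht ->]]]].
  1, 2: simpl in Hv; lia.
  apply in_tuples in Ht. destruct Ht as [Hl Hk]. destruct Hv as [m [Hm <-]].
  apply Hk, nth_In. lia.
Qed.

Lemma is_P_atoms (k : nat) (a : formula L) : In a (atoms k) -> is_P a.
Proof.
  intros Ha.
  destruct (in_atoms_inv k a Ha) as [[i [j [_ [_ [->| ->]]]]]|[R [t [_ ->]]]]; exact I.
Qed.

Lemma in_atoms_eq (k i j : nat) : i < k -> j < k ->
  In (FEq i j) (atoms k) /\ In (FNeq i j) (atoms k).
Proof.
  intros Hi Hj. unfold atoms.
  split; apply in_or_app; left; apply in_flat_map; exists i;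
    (split; [apply in_seq; lia|]); apply in_flat_map; exists j;
    (split; [apply in_seq; lia|]); simpl; auto.
Qed.

Lemma in_atoms_rel (k : nat) (R : Rsym L) (t : list nat) :
  length t = arity L R -> (forall a, In a t -> a < k) ->
  In (FRel R (fun m => nth m t 0)) (atoms k).
Proof.
  intros Hl Ht. unfold atoms. apply in_or_app. right. apply in_flat_map.
  exists R. split; [apply syms_complete|]. apply in_map_iff.
  exists t. split; [reflexivity|]. apply in_tuples. auto.
Qed.

Definition hintikka_step (k : nat) (a s : list (formula L)) : formula L :=
  FAnd (bigAnd a) (FAnd (bigAnd (map (FEx k) s)) (FAll k (bigOr s))).

(** A finite list containing every Hintikka formula of rank [r] in [k]
    variables; it makes the set of successor types below finite. *)
Fixpoint hintikka_candidates (r k : nat) : list (formula L) :=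
  match r with
  | 0 => map bigAnd (subseqs (atoms k))
  | S r' => map (fun ps => hintikka_step k (fst ps) (snd ps))
                (list_prod (subseqs (atoms k)) (subseqs (hintikka_candidates r' (S k))))
  end.

Section OneStructure.
Context (M : structure L) (d : M).

Definition atomic_type (xs : list M) : list (formula L) :=
  filter (fun a => classicb (sat M (env xs d) a)) (atoms (length xs)).

Fixpoint hintikka (r : nat) (xs : list M) : formula L :=
  match r with
  | 0 => bigAnd (atomic_type xs)
  | S r' => hintikka_step (length xs) (atomic_type xs)
      (filter (fun c => classicb (exists x, c = hintikka r' (xs ++ [x])))
              (hintikka_candidates r' (S (length xs))))
  end.

Definition successor_types (r : nat) (xs : list M) : list (formula L) :=
  filter (fun c => classicb (exists x, c = hintikka r (xs ++ [x])))
         (hintikka_candidates r (S (length xs))).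

Lemma hintikka_S (r : nat) (xs : list M) :
  hintikka (S r) xs = hintikka_step (length xs) (atomic_type xs) (successor_types r xs).
Proof. reflexivity. Qed.

Lemma hintikka_in_candidates (r : nat) (xs : list M) :
  In (hintikka r xs) (hintikka_candidates r (length xs)).
Proof.
  destruct r as [|r].
  - apply (in_map bigAnd), filter_in_subseqs.
  - rewrite hintikka_S. simpl.
    apply (in_map (fun ps => hintikka_step (length xs) (fst ps) (snd ps))
      _ (atomic_type xs, successor_types r xs)).
    apply in_prod; apply filter_in_subseqs.
Qed.

Lemma in_successor_types (r : nat) (xs : list M) (c : formula L) :
  In c (successor_types r xs) <-> exists x, c = hintikka r (xs ++ [x]).
Proof.
  unfold successor_types. rewrite filter_In, classicb_true. split; [tauto|].
  intros [x ->]. split; [|eauto].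
  pose proof (hintikka_in_candidates r (xs ++ [x])) as H.
  rewrite length_app, Nat.add_1_r in H. exact H.
Qed.

Lemma in_atomic_type (xs : list M) (a : formula L) :
  In a (atomic_type xs) <-> In a (atoms (length xs)) /\ sat M (env xs d) a.
Proof. unfold atomic_type. rewrite filter_In, classicb_true. reflexivity. Qed.

Lemma free_in_atomic_type (xs : list M) (v : nat) :
  free_in v (bigAnd (atomic_type xs)) -> v < length xs.
Proof.
  intros Hv. apply free_in_bigAnd in Hv. destruct Hv as [c [Hc Hv]].
  apply in_atomic_type in Hc. exact (free_in_atoms _ c v (proj1 Hc) Hv).
Qed.

Lemma is_P_atomic_type (xs : list M) : is_P (bigAnd (atomic_type xs)).
Proof.
  apply is_P_bigAnd. intros c Hc. apply in_atomic_type in Hc.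
  exact (is_P_atoms _ c (proj1 Hc)).
Qed.

Lemma sat_atomic_type (xs : list M) : sat M (env xs d) (bigAnd (atomic_type xs)).
Proof. apply sat_bigAnd. intros c Hc. apply in_atomic_type in Hc. apply Hc. Qed.

Lemma free_in_hintikka (r : nat) (xs : list M) (v : nat) :
  free_in v (hintikka r xs) -> v < length xs.
Proof.
  revert xs. induction r as [|r IH]; intros xs Hv; [exact (free_in_atomic_type xs v Hv)|].
  rewrite hintikka_S in Hv. destruct Hv as [Hv|[Hv|[Hne Hv]]].
  - exact (free_in_atomic_type xs v Hv).
  - apply free_in_bigAnd in Hv. destruct Hv as [c [Hc Hv]].
    apply in_map_iff in Hc. destruct Hc as [c' [<- Hc']]. destruct Hv as [Hne Hv].
    apply in_successor_types in Hc'. destruct Hc' as [x ->].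
    apply IH in Hv. rewrite length_app in Hv. simpl in Hv. lia.
  - apply free_in_bigOr in Hv. destruct Hv as [c [Hc Hv]].
    apply in_successor_types in Hc. destruct Hc as [x ->].
    apply IH in Hv. rewrite length_app in Hv. simpl in Hv. lia.
Qed.

Lemma free_in_hintikka_snoc (r : nat) (xs : list M) (x : M) (v : nat) :
  free_in v (hintikka r (xs ++ [x])) -> v <= length xs.
Proof.
  intros Hv. apply free_in_hintikka in Hv. rewrite length_app in Hv. simpl in Hv. lia.
Qed.

Lemma is_P_hintikka (r : nat) (xs : list M) : is_P (hintikka r xs).
Proof.
  revert xs. induction r as [|r IH]; intros xs; [exact (is_P_atomic_type xs)|].
  rewrite hintikka_S. split; [apply is_P_atomic_type|split].
  - apply is_P_bigAnd. intros c Hc. apply in_map_iff in Hc. destruct Hc as [c' [<- Hc']].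
    apply in_successor_types in Hc'. destruct Hc' as [x ->]. apply IH.
  - apply is_P_bigOr. intros c Hc.
    apply in_successor_types in Hc. destruct Hc as [x ->]. apply IH.
Qed.

Lemma sat_hintikka (r : nat) (xs : list M) : sat M (env xs d) (hintikka r xs).
Proof.
  revert xs. induction r as [|r IH]; intros xs; [exact (sat_atomic_type xs)|].
  rewrite hintikka_S. split; [apply sat_atomic_type|split].
  - apply sat_bigAnd. intros c Hc. apply in_map_iff in Hc. destruct Hc as [c' [<- Hc']].
    apply in_successor_types in Hc'. destruct Hc' as [x ->]. exists x.
    apply sat_upd_env; [apply free_in_hintikka_snoc|apply IH].
  - intro x. apply sat_bigOr. exists (hintikka r (xs ++ [x])).
    split; [apply in_successor_types; eauto|].
    apply sat_upd_env; [apply free_in_hintikka_snoc|apply IH].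
Qed.

End OneStructure.

Section Transfer.
Context (X Y : structure L) (dx : X) (dy : Y).

Lemma atomic_type_PC (xs : list X) (ys : list Y) :
  length ys = length xs -> sat Y (env ys dy) (bigAnd (atomic_type X dx xs)) ->
  PC_list X Y (combine xs ys).
Proof.
  intros Hl Hs.
  assert (Hat : forall a, In a (atoms (length xs)) ->
            sat X (env xs dx) a -> sat Y (env ys dy) a).
  { intros a Ha HaX. apply (proj1 (sat_bigAnd _ _ _) Hs). apply in_atomic_type. auto. }
  split; [|split].
  - intros x y y' H H'.
    destruct (in_combine_nth _ _ dx dy _ _ Hl H) as [i [Hi [<- <-]]].
    destruct (in_combine_nth _ _ dx dy _ _ Hl H') as [j [Hj [Hx <-]]].
    exact (Hat (FEq i j) (proj1 (in_atoms_eq _ i j Hi Hj)) (eq_sym Hx)).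
  - intros x x' y H H'.
    destruct (in_combine_nth _ _ dx dy _ _ Hl H) as [i [Hi [<- <-]]].
    destruct (in_combine_nth _ _ dx dy _ _ Hl H') as [j [Hj [<- Hy]]].
    apply NNPP. intro Hne.
    exact (Hat (FNeq i j) (proj2 (in_atoms_eq _ i j Hi Hj)) Hne (eq_sym Hy)).
  - intros R us vs Hlen HF HX.
    destruct (Forall2_in_combine xs ys dx dy us vs Hl HF) as [t [Ht [<- <-]]].
    rewrite length_map in Hlen.
    pose proof (Hat _ (in_atoms_rel _ R t Hlen Ht)) as HR. cbn [sat] in HR.
    unfold env in HR. rewrite <- Hlen, !map_nth_seq in HR. exact (HR HX).
Qed.

Lemma hintikka_extendable (r : nat) (xs : list X) (ys : list Y) :
  length ys = length xs -> sat Y (env ys dy) (hintikka X dx r xs) ->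
  extendable X Y r (combine xs ys).
Proof.
  revert xs ys. induction r as [|r IH]; intros xs ys Hl Hs; [exact (atomic_type_PC xs ys Hl Hs)|].
  rewrite hintikka_S in Hs. destruct Hs as [Hat [Hforth Hback]].
  split; [exact (atomic_type_PC xs ys Hl Hat)|split].
  - intro x.
    assert (Hin : In (FEx (length xs) (hintikka X dx r (xs ++ [x])))
                     (map (FEx (length xs)) (successor_types X dx r xs)))
      by (apply in_map, in_successor_types; eauto).
    destruct (proj1 (sat_bigAnd _ _ _) Hforth _ Hin) as [y Hy].
    exists y. rewrite <- combine_snoc by auto.
    apply IH; [rewrite !length_app; simpl; lia|].
    rewrite <- Hl in Hy. apply sat_upd_env in Hy; [exact Hy|].
    rewrite Hl. apply free_in_hintikka_snoc.
  - intro y. destruct (proj1 (sat_bigOr _ _ _) (Hback y)) as [c [Hc Hy]].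
    apply in_successor_types in Hc. destruct Hc as [x ->].
    exists x. rewrite <- combine_snoc by auto.
    apply IH; [rewrite !length_app; simpl; lia|].
    rewrite <- Hl in Hy. apply sat_upd_env in Hy; [exact Hy|].
    rewrite Hl. apply free_in_hintikka_snoc.
Qed.

Lemma lll_P_extendable : lll is_P X Y -> forall n, extendable X Y n [].
Proof.
  intros HXY n. apply (hintikka_extendable n [] []); [reflexivity|].
  assert (Hs : sentence (hintikka X dx n [])).
  { intros v Hv. apply free_in_hintikka in Hv. inversion Hv. }
  apply (holds_iff_sat Y _ (env [] dy) Hs), HXY; [apply is_P_hintikka|exact Hs|].
  apply (holds_iff_sat X _ (env [] dx) Hs), sat_hintikka.
Qed.

End Transfer.
End Hintikka.

Lemma fin_cond_characterizations (L : language) (X Y : structure L)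
    (HL : finite_language L) (HX : inhabited X) (HY : inhabited Y) :
  (fin_cond X Y <-> (forall n, II_wins n X Y)) /\
  (fin_cond X Y <-> lll is_P X Y) /\
  (fin_cond X Y <-> lll is_N Y X).
Proof.
  destruct HL as [syms Hsyms]. pose proof HX as [x0]. pose proof HY as [y0].
  assert (HP : fin_cond X Y <-> lll is_P X Y).
  { rewrite fin_cond_iff_extendable.
    split; [apply extendable_lll_P, HX|apply (lll_P_extendable syms Hsyms X Y x0 y0)]. }
  split; [|split; [exact HP|]].
  - rewrite fin_cond_iff_extendable.
    split; intros H n; [apply (extendable_II_wins X Y x0 y0)|apply (II_wins_extendable X Y x0)];
      apply H.
  - rewrite HP. split; apply lll_neg; auto using is_N_neg, is_P_neg.
Qed.

Theorem theorem5p1 (L : language) (X Y : structure L)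
    (HL : finite_language L) (HX : inhabited X) (HY : inhabited Y) :
  ((fin_cond X Y <-> (forall n, II_wins n X Y)) /\
   (fin_cond X Y <-> lll is_P X Y) /\
   (fin_cond X Y <-> lll is_N Y X))
  /\
  (((fin_cond X Y /\ fin_cond Y X) <->
      (forall n, II_wins n X Y /\ II_wins n Y X)) /\
   ((fin_cond X Y /\ fin_cond Y X) <-> equivF is_P X Y) /\
   ((fin_cond X Y /\ fin_cond Y X) <-> equivF is_N X Y) /\
   ((fin_cond X Y /\ fin_cond Y X) <-> equivF is_PN X Y) /\
   ((fin_cond X Y /\ fin_cond Y X) <-> lll is_PN X Y)).
Proof.
  destruct (fin_cond_characterizations L X Y HL HX HY) as [XY_games [XY_P XY_N]].
  destruct (fin_cond_characterizations L Y X HL HY HX) as [YX_games [YX_P YX_N]].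
  split; [tauto|].
  rewrite !equivF_iff_lll, !lll_PN, <- XY_P, <- XY_N, <- YX_P, <- YX_N.
  split; [|tauto].
  rewrite XY_games, YX_games. firstorder.
Qed.
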